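(* (Model Existence.) Every evident branch is satisfiable. Moreover, every complete evident branch has a surjective model, and every finite evident branch has a model $\mathcal{I}$ such that $\mathcal{I}\sigma$ is a finite set for every type $\sigma$.
   Context: Types: a countable set of base types including a distinguished $o$; other base types are sorts ($\alpha$). Types: base types, and $\sigma\tau$ for types $\sigma,\tau$ (functions from $\sigma$ to $\tau$; $\sigma\tau\mu=\sigma(\tau\mu)$). Countably many names, each with a unique type, infinitely many of each type. Terms: names; $st:\mu$ for $s:\tau\mu$, $t:\tau$; $\lambda x.t:\sigma\tau$ for a name $x:\sigma$ and $t:\tau$. Logical constants: $\neg:oo$, $=_\sigma:\sigma\sigma o$ for each $\sigma$; all other names are variables. Formulas: terms of type $o$; $s=_\sigma t$ is $(=_\sigma s)t$; $s\neq_\sigma t$ is $\neg(s=_\sigma t)$. Semantics: a frame $\mathcal{D}$ maps types to nonempty sets with $\mathcal{D}(\sigma\tau)\subseteq(\mathcal{D}\sigma\to\mathcal{D}\tau)$. An assignment $\mathcal{I}$ into $\mathcal{D}$ extends $\mathcal{D}$ and maps each name $x:\sigma$ into $\mathcal{D}\sigma$; $\mathcal{I}^x_a$ is the update. Partial evaluation: $\hat{\mathcal{I}}x=\mathcal{I}x$; $\hat{\mathcal{I}}(st)=(\hat{\mathcal{I}}s)(\hat{\mathcal{I}}t)$ when defined; $\hat{\mathcal{I}}(\lambda x.s)=f$ if $\lambda x.s:\sigma\tau$, $f\in\mathcal{D}(\sigma\tau)$ and $\widehat{\mathcal{I}^x_a}s=fa$ for all $a\in\mathcal{D}\sigma$.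 An interpretation is an assignment with total evaluation; it is surjective if for every type $\sigma$ and $a\in\mathcal{I}\sigma$ there is $s:\sigma$ with $\hat{\mathcal{I}}s=a$. Logical: $\mathcal{I}o=\{0,1\}$, $\mathcal{I}(\neg)$ negation, $\mathcal{I}(=_\sigma)$ identity. A model of a set of formulas is a logical interpretation evaluating each to $1$; satisfiable = has a model. Normalization: fixed type-preserving total $[\cdot]$; $s$ normal iff $[s]=s$; (N1) $[[s]]=[s]$; (N2) $[[s]t]=[st]$; (N3) $[xs_1\dots s_n]=x[s_1]\dots[s_n]$ for a name $x$, $n\ge0$, $xs_1\dots s_n$ of base type; (N4) $\hat{\mathcal{I}}[s]=\hat{\mathcal{I}}s$ for every interpretation. Substitutions: type-preserving partial functions $\theta$ from names to terms, $\theta^x_s$ the update; each extends to a type-preserving total $\hat\theta$ with (S1) $\hat\theta x=\theta x$ if $x\in\mathrm{Dom}\theta$, else $x$; (S2) $\hat\theta(st)=(\hat\theta s)(\hat\theta t)$; (S3) $[(\hat\theta(\lambda x.s))t]=[\widehat{\theta^x_t}s]$; (S4) $[\hat\emptyset s]=[s]$. A branch is a set of normal formulas. A branch $E$ is evident if ($x$ ranges over variables): (DN) $\neg\neg s\in E$ implies $s\in E$; (BQ) $s=_ot\in E$ implies $s,t\in E$ or $\neg s,\neg t\in E$; (BE) $s\neq_ot\in E$ implies $s,\neg t\in E$ or $\neg s,t\in E$; (FQ) $s=_{\sigma\tau}t\in E$ implies $[su]=[tu]\in E$ for every normal $u:\sigma$; (FE) $s\neq_{\sigma\tau}t\in E$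 implies $[sx]\neq[tx]\in E$ for some variable $x$; (Mat) if $xs_1\dots s_n\in E$ and $\neg xt_1\dots t_n\in E$ then $n\ge1$ and $s_i\neq t_i\in E$ for some $i$; (Dec) if $xs_1\dots s_n\neq_\alpha xt_1\dots t_n\in E$ then $n\ge1$ and $s_i\neq t_i\in E$ for some $i$; (Con) if $s=_\alpha t\in E$ and $u\neq_\alpha v\in E$ then either $s\neq u,t\neq u\in E$ or $s\neq v,t\neq v\in E$. A branch $E$ is complete if for every normal formula $s$, $s\in E$ or $\neg s\in E$. *)

From Stdlib Require Import List.
From mathcomp Require Import all_boot.
Set Implicit Arguments. Unset Strict Implicit. Unset Printing Implicit Defensive.

Section STT.
Variable B : countType.
Variable o : B.           (* the distinguished base type o; others are sorts *)

Inductive ty : Type := TBase (b : B) | TArr (s t : ty).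
Definition tyo : ty := TBase o.

Lemma ty_eq_dec : forall s t : ty, {s = t} + {s <> t}.
Proof. decide equality. exact: eq_comparable. Defined.

Inductive name : Type := NNeg | NEq (s : ty) | NVar (s : ty) (n : nat).

Definition nty (x : name) : ty :=
  match x with
  | NNeg => TArr tyo tyo
  | NEq s => TArr s (TArr s tyo)
  | NVar s _ => s
  end.

Lemma name_eq_dec : forall x y : name, {x = y} + {x <> y}.
Proof. decide equality; solve [exact: ty_eq_dec | exact: PeanoNat.Nat.eq_dec]. Defined.

Inductive tm : ty -> Type :=
| tName (x : name) : tm (nty x)
| tApp (s t : ty) (f : tm (TArr s t)) (a : tm s) : tm t
| tLam (x : name) (t : ty) (b : tm t) : tm (TArr (nty x) t).

Inductive spine : ty -> ty -> Type :=
| snil (s : ty) : spine s s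
| scons (s t r : ty) (a : tm s) (rest : spine t r) : spine (TArr s t) r.

Fixpoint sapply (s r : ty) (h : tm s) (sp : spine s r) {struct sp} : tm r :=
  match sp in spine s' r' return tm s' -> tm r' with
  | snil _ => fun h => h
  | scons _ _ _ a rest => fun h => sapply (tApp h a) rest
  end h.

Fixpoint smap (f : forall s, tm s -> tm s) (s r : ty) (sp : spine s r) {struct sp}
  : spine s r :=
  match sp in spine s' r' return spine s' r' with
  | snil s => snil s
  | scons _ _ _ a rest => scons (f _ a) (smap f rest)
  end.

(* "s_i P t_i for some i" for two spines of the same shape (forces n >= 1) *)
Inductive SomeDiff (P : forall s, tm s -> tm s -> Prop) :
  forall s r, spine s r -> spine s r -> Prop :=
| sd_here (s t r : ty) (a b : tm s) (r1 r2 : spine t r) :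
    P s a b -> SomeDiff P (scons a r1) (scons b r2)
| sd_later (s t r : ty) (a b : tm s) (r1 r2 : spine t r) :
    SomeDiff P r1 r2 -> SomeDiff P (scons a r1) (scons b r2).

(* Frames: D(st) is (isomorphic to) a set of functions D s -> D t, i.e. it
   comes with an application map that is extensional (injective). *)
Record frame : Type := Frame {
  car : ty -> Type;
  app : forall s t, car (TArr s t) -> car s -> car t;
  app_ext : forall s t (f g : car (TArr s t)),
      (forall a, app f a = app g a) -> f = g;
  car_ne : forall s, inhabited (car s) }.

Definition asg (D : frame) := forall x : name, car D (nty x).

Definition upd (D : frame) (I : asg D) (x : name) (a : car D (nty x)) : asg D :=
  fun y => match name_eq_dec x y with
           | left e => eq_rect x (fun z => car D (nty z)) a y e
           | right _ => I y
           end.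

(* Partial evaluation, as a relation:  ev I s a  <->  \hat I s = a *)
Fixpoint ev (D : frame) (I : asg D) (s : ty) (u : tm s) {struct u} : car D s -> Prop :=
  match u in tm s return car D s -> Prop with
  | tName x => fun a => a = I x
  | tApp _ _ f b => fun a => exists g c, ev I f g /\ ev I b c /\ app g c = a
  | tLam x _ b => fun g => forall c : car D (nty x), ev (@upd D I x c) b (app g c)
  end.

Definition interp (D : frame) (I : asg D) : Prop :=
  forall s (u : tm s), exists a, ev I u a.

Definition surjective_interp (D : frame) (I : asg D) : Prop :=
  forall s (a : car D s), exists u : tm s, ev I u a.

(* Logical interpretation; tv identifies I o with {0,1} (false/true). *)
Definition logical (D : frame) (I : asg D) (tv : car D tyo -> bool) : Prop :=
  [/\ interp I, bijective tv,
      (forall a, tv (@app D tyo tyo (I NNeg) a) = ~~ tv a) &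
      (forall s (a b : car D s),
          tv (@app D s tyo (@app D s (TArr s tyo) (I (NEq s)) a) b) = true
          <-> a = b)].

Definition is_model (E : tm tyo -> Prop) (D : frame) (I : asg D)
  (tv : car D tyo -> bool) : Prop :=
  logical I tv /\ forall u, E u -> forall a, ev I u a -> tv a = true.

Definition finite_type (T : Type) : Prop := exists l : list T, forall a, In a l.

Definition normal (nf : forall s, tm s -> tm s) (s : ty) (u : tm s) : Prop :=
  nf s u = u.

Record normalization (nf : forall s, tm s -> tm s) : Prop := {
  N1 : forall s (u : tm s), nf s (nf s u) = nf s u;
  N2 : forall s t (f : tm (TArr s t)) (a : tm s),
      nf t (tApp (nf _ f) a) = nf t (tApp f a);
  N3 : forall (x : name) (b : B) (sp : spine (nty x) (TBase b)),
      nf _ (sapply (tName x) sp) = sapply (tName x) (smap nf sp);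
  N4 : forall (D : frame) (I : asg D), interp I ->
      forall s (u : tm s) (a : car D s), ev I (nf s u) a <-> ev I u a }.

Definition subst := forall x : name, option (tm (nty x)).
Definition sempty : subst := fun _ => None.
Definition supd (th : subst) (x : name) (t : tm (nty x)) : subst :=
  fun y => match name_eq_dec x y with
           | left e => Some (eq_rect x (fun z => tm (nty z)) t y e)
           | right _ => th y
           end.

Record subst_ext (nf : forall s, tm s -> tm s)
  (sa : subst -> forall s, tm s -> tm s) : Prop := {
  S1 : forall th x, sa th _ (tName x) =
                    match th x with Some t => t | None => tName x end;
  S2 : forall th s t (f : tm (TArr s t)) (a : tm s),
      sa th t (tApp f a) = tApp (sa th _ f) (sa th s a);
  S3 : forall th (x : name) t (b : tm t) (a : tm (nty x)),
      nf t (tApp (sa th _ (tLam x b)) a) = nf t (sa (@supd th x a) t b);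
  S4 : forall s (u : tm s), nf s (sa sempty s u) = nf s u }.

Definition neg (u : tm tyo) : tm tyo := @tApp tyo tyo (tName NNeg) u.
Definition teq (s : ty) (u v : tm s) : tm tyo :=
  @tApp s tyo (@tApp s (TArr s tyo) (tName (NEq s)) u) v.

Definition branch (nf : forall s, tm s -> tm s) (E : tm tyo -> Prop) : Prop :=
  forall u, E u -> normal nf u.

Record evident (nf : forall s, tm s -> tm s) (E : tm tyo -> Prop) : Prop := {
  ev_DN : forall u, E (neg (neg u)) -> E u;
  ev_BQ : forall u v : tm tyo, E (teq u v) -> (E u /\ E v) \/ (E (neg u) /\ E (neg v));
  ev_BE : forall u v : tm tyo, E (neg (teq u v)) ->
      (E u /\ E (neg v)) \/ (E (neg u) /\ E v);
  ev_FQ : forall s t (f g : tm (TArr s t)), E (teq f g) ->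
      forall u : tm s, normal nf u -> E (teq (nf t (tApp f u)) (nf t (tApp g u)));
  ev_FE : forall s t (f g : tm (TArr s t)), E (neg (teq f g)) ->
      exists n : nat,
        E (neg (teq (nf t (@tApp s t f (tName (NVar s n))))
                    (nf t (@tApp s t g (tName (NVar s n))))));
  ev_Mat : forall s (k : nat) (sp1 sp2 : spine s tyo),
      E (sapply (tName (NVar s k)) sp1) ->
      E (neg (sapply (tName (NVar s k)) sp2)) ->
      SomeDiff (fun r a b => E (neg (teq a b))) sp1 sp2;
  ev_Dec : forall (al : B), al <> o -> forall s (k : nat) (sp1 sp2 : spine s (TBase al)),
      E (neg (teq (sapply (tName (NVar s k)) sp1) (sapply (tName (NVar s k)) sp2))) ->
      SomeDiff (fun r a b => E (neg (teq a b))) sp1 sp2;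
  ev_Con : forall (al : B), al <> o -> forall u v w z : tm (TBase al),
      E (teq u v) -> E (neg (teq w z)) ->
      (E (neg (teq u w)) /\ E (neg (teq v w))) \/
      (E (neg (teq u z)) /\ E (neg (teq v z))) }.

Definition complete (nf : forall s, tm s -> tm s) (E : tm tyo -> Prop) : Prop :=
  forall u : tm tyo, normal nf u -> E u \/ E (neg u).

Definition finite_branch (E : tm tyo -> Prop) : Prop :=
  exists l : list (tm tyo), forall u, E u <-> In u l.

End STT.

From Stdlib Require Import List Eqdep_dec Lia.
From mathcomp Require Import all_boot zify boolp classical_sets.

Set Implicit Arguments. Unset Strict Implicit. Unset Printing Implicit Defensive.

(* For every type s we build a set Val s
   of values and a relation [possible u a] ("the term u may denote a"): at o
   the values are the truth values, u possibly denoting true (false) unless E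
   contains ~u (u); at a sort they are the discriminants, the maximal sets of
   normal terms no two of which E declares distinct; at s -> t they are the
   functions Val s -> Val t tracked by some term.  By induction on types, every
   set of pairwise compatible terms has a common possible value, terms sharing
   a value are compatible and hence never declared distinct, every value is
   possible for some term, and equations of E identify values.  Interpreting
   each name by one of its possible values, a substitution argument shows that
   every term evaluates to one of its possible values, so every formula of E is
   true.  If E is complete, a term possibly denotes only its value, which gives
   surjectivity; if E is finite, a discriminant is determined by its trace on
   the finitely many terms occurring in disequations of E. *)

Local Open Scope classical_set_scope.

Lemma maximal_independent_extension (T : Type) (N : set T) (D : T -> T -> Prop)
    (A0 : set T) :
  A0 `<=` N -> (forall s t, A0 s -> A0 t -> ~ D s t) ->
  exists A : set T, [/\ A0 `<=` A, A `<=` N, (forall s t, A s -> A t -> ~ D s t) &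
    forall t, N t -> ~ D t t -> (forall s, A s -> ~ D s t /\ ~ D t s) -> A t].
Proof.
move=> A0N A0D.
pose indep (X : set T) := forall s t, X s -> X t -> ~ D s t.
have [A [[AN AD] Amax]] : exists A : set T, (A `<=` N /\ indep (A0 `|` A)) /\
    forall A', A `<` A' -> ~ (A' `<=` N /\ indep (A0 `|` A')).
  apply: Zorn_bigcup => F FP Ftot; split.
    by move=> t [X FX Xt]; case: (FP X FX) => XN _; exact: XN.
  move=> s t [s0|[X FX Xs]] [t0|[Y FY Yt]].
  - exact: A0D.
  - by case: (FP Y FY) => _; apply; [left|right].
  - by case: (FP X FX) => _; apply; [right|left].
  - have [XY|YX] := Ftot X Y FX FY.
      by case: (FP Y FY) => _; apply; right => //; apply: XY.
    by case: (FP X FX) => _; apply; right => //; apply: YX.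
exists (A0 `|` A); split => //; first by move=> t [/A0N|/AN].
move=> t Nt Dtt tA; apply: contrapT => tNA.
apply: (Amax (A `|` [set t])).
  by split; [move=> x Ax; left|move=> sub; apply: tNA; right; apply: sub; right].
split; first by move=> x [/AN|->].
have grow x : (A0 `|` (A `|` [set t])) x -> (A0 `|` A) x \/ x = t.
  by case=> [?|[?|->]]; [left; left|left; right|right].
move=> x y /grow[xA|->] /grow[yA|->].
- exact: AD.
- by case: (tA x xA).
- by case: (tA y yA).
- exact: Dtt.
Qed.

Lemma finite_type_inj (X Y : Type) (h : X -> Y) (L : seq Y) :
  (forall x, In (h x) L) -> injective h -> finite_type X.
Proof.
move=> hL hI.
exists (flat_map (fun y => if pselect (exists x, h x = y) is left ex
                           then [:: sval (cid ex)] else [::]) L).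
move=> x; apply/in_flat_map; exists (h x); split => //.
case: pselect => [ex|]; last by case; exists x.
by left; apply: hI; rewrite (svalP (cid ex)).
Qed.

Lemma finite_type_sig (A : Type) (P : A -> Prop) :
  finite_type A -> finite_type {x | P x}.
Proof.
case=> l lA; apply: (@finite_type_inj _ _ sval l) => [[x _]|[x p] [y q] /= exy] //.
exact: eq_exist.
Qed.

Lemma finite_type_fun (A C : Type) :
  finite_type A -> finite_type C -> finite_type (A -> C).
Proof.
case=> lA allA [lC allC].
suff [F FP] : exists F : seq (A -> C),
    forall f, exists2 g, In g F & forall x, In x lA -> f x = g x.
  by exists F => f; have [g Fg fg] := FP f; rewrite (funext (fun x => fg x (allA x))).
elim: lA {allA} => [|x l [F FP]].
  have [[f0]|noAC] := EM (inhabited (A -> C)).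
    by exists [:: f0] => f; exists f0 => //; left.
  by exists [::] => f; case: noAC.
exists (flat_map (fun g => map (fun c y => if pselect (y = x) then c else g y) lC) F).
move=> f; have [g Fg fg] := FP f.
exists (fun y => if pselect (y = x) then f x else g y).
  by apply/in_flat_map; exists g; split => //; apply/in_map_iff; exists (f x).
move=> y /= yxl; case: pselect => [yx|yNx]; first by rewrite /= yx.
by case: yxl => [xy|]; [case: yNx|apply: fg].
Qed.

Lemma finite_bool_seqs (n : nat) :
  exists L : seq (seq bool), forall bs, size bs = n -> In bs L.
Proof.
elim: n => [|n [L LP]]; first by exists [:: [::]] => -[|? ?] //= _; left.
exists (flat_map (fun bs => [:: true :: bs; false :: bs]) L) => -[|c bs] //= [/LP bsL].
by apply/in_flat_map; exists bs; split => //; case: c; [left|right; left].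
Qed.

Lemma ev_functional (B : countType) (o : B) (D : frame B) (J : asg o D) s
    (u : tm o s) a a' :
  ev J u a -> ev J u a' -> a = a'.
Proof.
elim: u J a a' => [x|s1 t f IHf v IHv|x t b IHb] J a a' /=.
- by move=> -> ->.
- move=> [g [c [fg [vc <-]]]] [g' [c' [fg' [vc' <-]]]].
  by rewrite (IHf _ _ _ fg fg') (IHv _ _ _ vc vc').
- by move=> ba ba'; apply: app_ext => c; exact: IHb (ba c) (ba' c).
Qed.

Section ModelExistence.
Variables (B : countType) (o : B) (nf : forall s : ty B, tm o s -> tm o s).
Hypothesis nfP : normalization nf.
Variable E : tm o (tyo o) -> Prop.
Hypothesis E_evident : evident nf E.

Local Notation TY := (ty B).
Local Notation TM := (tm o).
Local Notation var s k := (tName o (NVar s k)).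

Lemma nfK s (u : TM s) : nf (nf u) = nf u.
Proof. exact: (N1 nfP). Qed.

Lemma nf_app_nf s t (f : TM (TArr s t)) (a : TM s) : nf (tApp (nf f) a) = nf (tApp f a).
Proof. exact: (N2 nfP). Qed.

Lemma nf_neg (u : TM (tyo o)) : nf (neg u) = neg (nf u).
Proof. exact: (N3 nfP (x := NNeg B) (scons u (snil o _))). Qed.

Lemma nf_teq s (u v : TM s) : nf (teq u v) = teq (nf u) (nf v).
Proof. exact: (N3 nfP (x := NEq s) (scons u (scons v (snil o _)))). Qed.

Lemma nf_var_spine s k b (sp : spine o s (TBase b)) :
  nf (sapply (var s k) sp) = sapply (var s k) (smap nf sp).
Proof. exact: (N3 nfP). Qed.

Lemma nf_var b k : nf (var (TBase b) k) = var (TBase b) k.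
Proof. exact: (nf_var_spine k (snil o _)). Qed.

Lemma SomeDiff_nil P s : ~ SomeDiff P (snil o s) (snil o s).
Proof. by move=> sd; inversion sd. Qed.

Lemma existT_ty_inj {P : TY -> Type} {s : TY} {x y : P s} : existT P s x = existT P s y -> x = y.
Proof. exact: (inj_pair2_eq_dec _ (@ty_eq_dec B)). Qed.

Lemma SomeDiff_consE P s t r (a b : TM s) (r1 r2 : spine o t r) :
  SomeDiff P (scons a r1) (scons b r2) -> P s a b \/ SomeDiff P r1 r2.
Proof.
move=> sd; inversion sd; repeat match goal with
  | e : existT _ _ _ = existT _ _ _ |- _ => apply existT_ty_inj in e; subst
  end; tauto.
Qed.

Lemma neg_teq_inj s (u v u' v' : TM s) :
  neg (teq u v) = neg (teq u' v') -> u = u' /\ v = v'.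
Proof.
by case=> /existT_ty_inj -> /existT_ty_inj ->.
Qed.

Definition distinct s (u v : TM s) : Prop := E (neg (teq u v)).

Definition lit (x : bool) (u : TM (tyo o)) : TM (tyo o) := if x then u else neg u.

(* Membership of a literal of base type [b]; it can only hold when [b = o]. *)
Definition in_lit b (x : bool) (u : TM (TBase b)) : Prop :=
  exists e : TBase b = tyo o, E (lit x (eq_rect _ TM u _ e)).

Lemma in_lit_o x (u : TM (tyo o)) : in_lit x u <-> E (lit x u).
Proof.
split => [[e]|]; last by exists erefl.
by rewrite (UIP_dec (@ty_eq_dec B) e erefl).
Qed.

Definition possible_bool b (x : bool) (u : TM (TBase b)) : Prop := ~ in_lit (~~ x) u.

Definition discriminant b (P : TM (TBase b) -> Prop) : Prop :=
  [/\ forall t, P t -> nf t = t,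
      forall s t, P s -> P t -> ~ distinct s t &
      forall t, nf t = t -> ~ distinct t t ->
        (forall s, P s -> ~ distinct s t /\ ~ distinct t s) -> P t].

(* A value of base type [b] is a truth value paired with the set of normal
   terms that possibly denote it.  At [o] the set is determined by the truth
   value; at a sort the truth value is a dummy [false] and the set is a
   discriminant. *)
Definition base_value b (p : bool * (TM (TBase b) -> Prop)) : Prop :=
  if b == o then p.2 = possible_bool p.1 else p.1 = false /\ discriminant p.2.

(* The values of [s -> t] are the functions tracked by some term, so values
   and the relation "u possibly denotes a" are defined simultaneously. *)
Fixpoint pv (s : TY) : {T : Type & TM s -> T -> Prop} :=
  match s with
  | TBase b => existT (fun T => TM (TBase b) -> T -> Prop)
      {p | base_value p} (fun u p => (sval p).2 (nf u))
  | TArr s1 s2 => existT (fun T => TM (TArr s1 s2) -> T -> Prop)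
      {f : projT1 (pv s1) -> projT1 (pv s2) |
         exists u, forall v a, projT2 (pv s1) v a -> projT2 (pv s2) (tApp u v) (f a)}
      (fun u f => forall v a, projT2 (pv s1) v a -> projT2 (pv s2) (tApp u v) (sval f a))
  end.

Definition Val s : Type := projT1 (pv s).
Definition possible s : TM s -> Val s -> Prop := projT2 (pv s).

Lemma Val_arr_ext s t (f g : Val (TArr s t)) : (forall a, sval f a = sval g a) -> f = g.
Proof. by case: f g => f fP [g gP] /= fg; apply: eq_exist; apply: funext. Qed.

Lemma possible_nf s (u : TM s) a : possible (nf u) a <-> possible u a.
Proof.
elim: s u a => [b|s1 _ s2 IH] u a; first by rewrite /possible /= nfK.
split=> ua v c vc; apply/IH.
  by rewrite -nf_app_nf IH; apply: ua.
by rewrite nf_app_nf IH; apply: ua.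
Qed.

Fixpoint compatible (s : TY) : TM s -> TM s -> Prop :=
  match s return TM s -> TM s -> Prop with
  | TBase b => fun u v =>
      if b == o then forall x, ~ (in_lit x (nf u) /\ in_lit (~~ x) (nf v))
      else ~ distinct (nf u) (nf v) /\ ~ distinct (nf v) (nf u)
  | TArr s1 s2 => fun u v => forall (a : Val s1) x y,
      possible x a -> possible y a -> compatible (tApp u x) (tApp v y)
  end.

Inductive share_values : forall s r, spine o s r -> spine o s r -> Prop :=
| share_nil s : share_values (snil o s) (snil o s)
| share_cons s t r (a b : TM s) (r1 r2 : spine o t r) (c : Val s) :
    possible a c -> possible b c -> share_values r1 r2 ->
    share_values (scons a r1) (scons b r2).

Lemma share_values_sym s r (sp1 sp2 : spine o s r) :
  share_values sp1 sp2 -> share_values sp2 sp1.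
Proof.
by elim=> [s'|? ? ? ? ? ? ? c ac bc _ IH]; [exact: share_nil|exact: share_cons bc ac IH].
Qed.

Fixpoint ty_size (s : TY) : nat :=
  match s with TBase _ => 1 | TArr s t => (ty_size s + ty_size t).+1 end.

Lemma compatible_of_spines s (u v : TM s) :
  (forall b (sp1 sp2 : spine o s (TBase b)), share_values sp1 sp2 ->
     compatible (sapply u sp1) (sapply v sp2)) ->
  compatible u v.
Proof.
elim: s u v => [b|s1 _ s2 IH] u v uv; first exact: (uv b _ _ (share_nil _)).
move=> a x y xa ya; apply: IH => b sp1 sp2 sp12.
exact: (uv b (scons x sp1) (scons y sp2) (share_cons xa ya sp12)).
Qed.

Lemma share_values_SomeDiff P s r (sp1 sp2 : spine o s r) :
  share_values sp1 sp2 -> SomeDiff P (smap nf sp1) (smap nf sp2) ->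
  exists s' (a b : TM s') (c : Val s'),
    [/\ P s' (nf a) (nf b), possible a c, possible b c & ty_size s' < ty_size s].
Proof.
elim=> [s0|s0 t0 r0 a b r1 r2 c ac bc _ IH] /=; first by move/SomeDiff_nil.
case/SomeDiff_consE => [Pab|/IH [s' [a' [b' [c' [Pab' ac' bc' lt]]]]]].
  by exists s0, a, b, c; split => //=; lia.
by exists s', a', b', c'; split => //=; lia.
Qed.

Definition values_not_distinct s : Prop :=
  forall (u v : TM s) c, possible u c -> possible v c -> ~ distinct (nf u) (nf v).

(* By (Mat) and (Dec), a clash between two applications of the same variable
   is inherited by a pair of corresponding arguments, which share a value at a
   smaller type. *)
Lemma var_self_compatible s k :
  (forall s', ty_size s' < ty_size s -> values_not_distinct s') ->
  compatible (var s k) (var s k).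
Proof.
move=> smaller; apply: compatible_of_spines => b sp1 sp2 sp12 /=.
have noDiff (sp sp' : spine o s (TBase b)) : share_values sp sp' ->
    ~ SomeDiff (fun r a b => E (neg (teq a b))) (smap nf sp) (smap nf sp').
  move=> sh /(share_values_SomeDiff sh) [s' [a [b' [c [Dab ac bc lt]]]]].
  exact: (smaller s' lt a b' c ac bc Dab).
rewrite !nf_var_spine; case: (b =P o) => [eb|bNo].
  subst b => -[] []; rewrite !in_lit_o /= => E1 E2.
    exact: noDiff sp12 (ev_Mat E_evident E1 E2).
  exact: noDiff (share_values_sym sp12) (ev_Mat E_evident E2 E1).
split => D12.
  exact: noDiff sp12 (ev_Dec E_evident bNo D12).
exact: noDiff (share_values_sym sp12) (ev_Dec E_evident bNo D12).
Qed.

Record pv_good (s : TY) : Prop := {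
  common_value : forall T : TM s -> Prop, (exists t, T t) ->
    (forall u v, T u -> T v -> compatible u v) -> exists a, forall u, T u -> possible u a;
  shared_compatible : forall (u v : TM s) a, possible u a -> possible v a -> compatible u v;
  compatible_not_distinct : forall u v : TM s, compatible u v -> ~ distinct (nf u) (nf v);
  value_inhabited : forall a : Val s, exists u, possible u a;
  equation_value : forall (u v : TM s) a b,
    E (teq (nf u) (nf v)) -> possible u a -> possible v b -> a = b }.

Lemma pv_good_not_distinct s : pv_good s -> values_not_distinct s.
Proof.
by move=> G u v c uc vc; apply: compatible_not_distinct G _ _ (shared_compatible G uc vc).
Qed.

Lemma self_compatible_value s (u : TM s) :
  pv_good s -> compatible u u -> exists a, possible u a.
Proof.
move=> G uu; have [|v w -> ->|a aP] := common_value G (T := eq^~ u); first by exists u.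
  exact: uu.
by exists a; apply: aP.
Qed.

Lemma var_consistent k : ~ (E (var (tyo o) k) /\ E (neg (var (tyo o) k))).
Proof.
by case=> E1 E2; apply: SomeDiff_nil (ev_Mat E_evident (sp1 := snil o _) (sp2 := snil o _) E1 E2).
Qed.

Lemma base_value_o x : base_value (b := o) (x, possible_bool x).
Proof. by rewrite /base_value eqxx. Qed.

Definition bool_val (x : bool) : Val (tyo o) := exist _ (x, possible_bool x) (base_value_o x).

Definition truth (a : Val (tyo o)) : bool := (sval a).1.

Lemma bool_valK (a : Val (tyo o)) : bool_val (truth a) = a.
Proof.
case: a => [[x P] xP]; apply: eq_exist; rewrite /truth /=.
by move: xP; rewrite /base_value eqxx /= => ->.
Qed.

Lemma possible_bool_val (u : TM (tyo o)) x :
  possible u (bool_val x) <-> ~ E (lit (~~ x) (nf u)).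
Proof. by rewrite -in_lit_o. Qed.

Lemma compatible_o (u v : TM (tyo o)) :
  compatible u v <-> forall x, ~ (E (lit x (nf u)) /\ E (lit (~~ x) (nf v))).
Proof. by rewrite /= eqxx; split=> uv x; rewrite ?in_lit_o; have := uv x; rewrite ?in_lit_o. Qed.

Lemma pv_good_o : pv_good (tyo o).
Proof.
split.
- move=> T _ Tcomp; have [[t [Tt Et]]|noE] := EM (exists t, T t /\ E (nf t)).
    exists (bool_val true) => u Tu; apply/possible_bool_val => /= Eu.
    exact: (proj1 (compatible_o t u) (Tcomp t u Tt Tu) true).
  by exists (bool_val false) => u Tu; apply/possible_bool_val => Eu; apply: noE; exists u.
- move=> u v a; rewrite -(bool_valK a) !possible_bool_val compatible_o => Eu Ev x.
  by case: x (truth a) Eu Ev => [] [] Eu Ev [Exu Exv]; [exact: Ev|exact: Eu|exact: Eu|exact: Ev].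
- move=> u v /compatible_o uv Duv.
  by case: (ev_BE E_evident Duv) => -[Eu Ev]; [apply: (uv true)|apply: (uv false)].
- move=> a; rewrite -(bool_valK a); set p := var (tyo o) 0.
  have [Ep|NEp] := EM (E (lit (~~ truth a) p)); last first.
    by exists p; apply/possible_bool_val; rewrite nf_var.
  exists (neg p); apply/possible_bool_val; rewrite nf_neg nf_var.
  case: (truth a) Ep => /= Ep Enp; apply: (@var_consistent 0); split => //.
  exact: (ev_DN E_evident Enp).
- move=> u v a b Euv; rewrite -(bool_valK a) -(bool_valK b) !possible_bool_val.
  by case: (ev_BQ E_evident Euv) => -[Eu Ev]; case: (truth a); case: (truth b).
Qed.

Section Sort.
Variable b : B.
Hypothesis b_sort : b <> o.

Lemma base_value_sort P : discriminant P -> base_value (b := b) (false, P).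
Proof. by rewrite /base_value (introF eqP b_sort). Qed.

Definition disc_val P (dP : discriminant P) : Val (TBase b) :=
  exist _ (false, P) (base_value_sort dP).

Lemma Val_sortP (a : Val (TBase b)) : exists P (dP : discriminant P), a = disc_val dP.
Proof.
case: a => [[x P] xP].
have [x0 dP] : x = false /\ discriminant P by move: xP; rewrite /base_value (introF eqP b_sort).
by exists P, dP; apply: eq_exist; rewrite x0.
Qed.

Lemma disc_val_ext P Q (dP : discriminant P) (dQ : discriminant Q) :
  (forall w, P w <-> Q w) -> disc_val dP = disc_val dQ.
Proof.
move=> PQ; have ePQ : P = Q by apply: funext => w; apply: propext.
by subst Q; rewrite (Prop_irrelevance dP dQ).
Qed.

Lemma compatible_sort (u v : TM (TBase b)) :
  compatible u v <-> ~ distinct (nf u) (nf v) /\ ~ distinct (nf v) (nf u).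
Proof. by rewrite /= (introF eqP b_sort). Qed.

Lemma var_not_distinct k : ~ distinct (var (TBase b) k) (var (TBase b) k).
Proof.
move=> D; apply: SomeDiff_nil.
exact: (ev_Dec E_evident b_sort (sp1 := snil o _) (sp2 := snil o _) D).
Qed.

(* By (Con), both sides of an equation are distinct from one side of any
   disequation; hence a discriminant containing one side of an equation is
   included in any discriminant containing the other. *)
Lemma discriminant_sub (P Q : TM (TBase b) -> Prop) u v :
  discriminant P -> discriminant Q -> E (teq u v) \/ E (teq v u) ->
  P u -> Q v -> forall w, P w -> Q w.
Proof.
move=> [Pnf Pind _] [_ Qind Qmax] Euv Pu Qv w Pw.
have split_dis x y : distinct x y ->
    (distinct u x /\ distinct v x) \/ (distinct u y /\ distinct v y).
  move=> Dxy; case: Euv => [Euv|Evu]; first exact: (ev_Con E_evident b_sort Euv Dxy).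
  by case: (ev_Con E_evident b_sort Evu Dxy) => -[D1 D2]; [left|right].
apply: Qmax; [exact: Pnf|exact: Pind|move=> z Qz].
by split=> /split_dis [] [Du Dv]; [exact: (Qind _ _ Qv Qz Dv)|exact: (Pind _ _ Pu Pw Du)
                                 |exact: (Pind _ _ Pu Pw Du)|exact: (Qind _ _ Qv Qz Dv)].
Qed.

Lemma pv_good_sort : pv_good (TBase b).
Proof.
split.
- move=> T _ Tcomp.
  have [P [TP Pnf Pind Pmax]] := @maximal_independent_extension _ (fun t => nf t = t)
    (@distinct _) [set nf t | t in T] ltac:(by move=> _ [t _ <-]; rewrite nfK)
    ltac:(by move=> _ _ [t Tt <-] [t' Tt' <-]; case/compatible_sort: (Tcomp t t' Tt Tt')).
  have dP : discriminant P by split.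
  by exists (disc_val dP) => u Tu; apply: TP; exists u.
- move=> u v a; have [P [dP ->]] := Val_sortP a => Pu Pv.
  by have [_ Pind _] := dP; apply/compatible_sort; split; apply: Pind.
- by move=> u v /compatible_sort [].
- move=> a; have [P [dP ->]] := Val_sortP a.
  have [[t Pt]|noP] := EM (exists t, P t).
    by exists t; have [Pnf _ _] := dP; rewrite /possible /= (Pnf _ Pt).
  exists (var (TBase b) 0); rewrite /possible /= nf_var.
  have [_ _] := dP; apply; [exact: nf_var|exact: var_not_distinct|].
  by move=> s Ps; case: noP; exists s.
- move=> u v a a'; have [P [dP ->]] := Val_sortP a; have [Q [dQ ->]] := Val_sortP a'.
  move=> Euv Pu Qv; apply: disc_val_ext => w; split.
    exact: (discriminant_sub dP dQ (or_introl Euv) Pu Qv).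
  exact: (discriminant_sub dQ dP (or_intror Euv) Qv Pu).
Qed.

End Sort.

Lemma common_value_arr s1 s2 (T : TM (TArr s1 s2) -> Prop) :
  pv_good s1 -> pv_good s2 -> (exists t, T t) ->
  (forall u v, T u -> T v -> compatible u v) -> exists f, forall u, T u -> possible u f.
Proof.
move=> G1 G2 [t0 Tt0] Tcomp.
have [f fP] : {f : Val s1 -> Val s2 &
    forall a t x, T t -> possible x a -> possible (tApp t x) (f a)}.
  apply: (choice (P := fun a c => forall t x, T t -> possible x a -> possible (tApp t x) c)).
  move=> a; have [x xa] := value_inhabited G1 a.
  have [|w w'|c cP] := common_value G2
      (T := fun w => exists t x, [/\ T t, possible x a & w = tApp t x]).
  - by exists (tApp t0 x), t0, x.
  - move=> [t [y [Tt ya ->]]] [t' [y' [Tt' ya' ->]]].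
    exact: (Tcomp t t' Tt Tt' a y y' ya ya').
  - by exists c => t y Tt ya; apply: cP; exists t, y.
have tracked : exists u, forall v a, possible v a -> possible (tApp u v) (f a).
  by exists t0 => v a; apply: fP.
by exists (exist _ f tracked) => u Tu v a; apply: fP.
Qed.

Lemma pv_good_arr s1 s2 : pv_good s1 -> pv_good s2 ->
  (forall k, compatible (var s1 k) (var s1 k)) -> pv_good (TArr s1 s2).
Proof.
move=> G1 G2 var_comp; split.
- by move=> T; apply: common_value_arr.
- move=> u v f uf vf a x y xa ya.
  exact: (shared_compatible G2 (uf x a xa) (vf y a ya)).
- move=> u v uv /(ev_FE E_evident) [n]; rewrite !nf_app_nf.
  have [a na] := self_compatible_value G1 (var_comp n).
  exact: (compatible_not_distinct G2 (uv a _ _ na na)).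
- by case=> f [u uf]; exists u.
- move=> u v f g Euv uf vg; apply: Val_arr_ext => a.
  have [x xa] := value_inhabited G1 a; rewrite -possible_nf in xa.
  apply: (equation_value G2 (ev_FQ E_evident Euv (nfK x))).
    by apply/possible_nf; rewrite nf_app_nf possible_nf; apply: uf.
  by apply/possible_nf; rewrite nf_app_nf possible_nf; apply: vg.
Qed.

Lemma pv_good_all s : pv_good s.
Proof.
elim/ltn_ind: {s}(ty_size s) {-2}s (erefl (ty_size s)) => n IH [b|s1 s2] sn.
  by case: (b =P o) => [->|bNo]; [exact: pv_good_o|exact: pv_good_sort].
have smaller s' : ty_size s' < n -> pv_good s' by move=> lt; exact: (IH _ lt s' erefl).
apply: pv_good_arr; [apply: smaller; rewrite -sn /=; lia..|move=> k].
apply: var_self_compatible => s' lt; apply: pv_good_not_distinct; apply: smaller.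
by rewrite -sn /=; lia.
Qed.

Lemma var_value s k : exists a, possible (var s k) a.
Proof.
apply: self_compatible_value (pv_good_all s) _.
by apply: var_self_compatible => s' _; apply: pv_good_not_distinct; apply: pv_good_all.
Qed.

Lemma Val_inhabited s : inhabited (Val s).
Proof. by have [a _] := var_value s 0. Qed.

Definition pv_frame : frame B :=
  @Frame B Val (fun s t f a => sval f a) (@Val_arr_ext) Val_inhabited.

Lemma possible_neg v (a : Val (tyo o)) :
  possible v a -> possible (neg v) (bool_val (~~ truth a)).
Proof.
rewrite -{1}(bool_valK a) !possible_bool_val nf_neg negbK.
by case: (truth a) => //= va /(ev_DN E_evident).
Qed.

Lemma neg_tracked : exists u : TM (TArr (tyo o) (tyo o)),
  forall v (a : Val (tyo o)), possible v a -> possible (tApp u v) (bool_val (~~ truth a)).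
Proof. by exists (tName o (NNeg B)); exact: possible_neg. Qed.

Definition neg_val : Val (TArr (tyo o) (tyo o)) :=
  exist _ (fun a => bool_val (~~ truth a)) neg_tracked.

Lemma possible_teq s x v (a b : Val s) :
  possible x a -> possible v b -> possible (teq x v) (bool_val `[< a = b >]).
Proof.
rewrite possible_bool_val nf_teq; have [<-|aNb] := EM (a = b) => xa va.
  by rewrite asboolT //=; exact: (pv_good_not_distinct (pv_good_all s) xa va).
by rewrite asboolF //= => Exv; apply: aNb; exact: (equation_value (pv_good_all s) Exv xa va).
Qed.

Lemma eq_tracked s (a : Val s) : exists u : TM (TArr s (tyo o)),
  forall v b, possible v b -> possible (tApp u v) (bool_val `[< a = b >]).
Proof.
have [x xa] := value_inhabited (pv_good_all s) a.
by exists (tApp (tName o (NEq s)) x) => v b; exact: possible_teq.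
Qed.

Definition eq_val_at s (a : Val s) : Val (TArr s (tyo o)) :=
  exist _ (fun b => bool_val `[< a = b >]) (eq_tracked a).

Lemma eq_val_tracked s : exists u : TM (TArr s (TArr s (tyo o))),
  forall x (a : Val s), possible x a -> possible (tApp u x) (eq_val_at a).
Proof. by exists (tName o (NEq s)) => x a xa v b; exact: possible_teq. Qed.

Definition eq_val s : Val (TArr s (TArr s (tyo o))) := exist _ (@eq_val_at s) (eq_val_tracked s).

Definition pv_asg : asg o pv_frame := fun x =>
  match x as x return Val (nty o x) with
  | NNeg => neg_val
  | NEq s => eq_val s
  | NVar s k => sval (cid (var_value s k))
  end.

Lemma possible_asg x : possible (tName o x) (pv_asg x).
Proof.
case: x => [|s|s k] /=; [exact: possible_neg|by move=> v a va w b wb; exact: possible_teq|].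
exact: svalP (cid (var_value s k)).
Qed.

Section Evaluation.
Variable sa : subst o -> forall s : TY, TM s -> TM s.
Hypothesis saP : subst_ext nf sa.

(* Generalising over the substitution lets the lambda case use (S3): applied
   to an argument, the substituted abstraction behaves like its body under the
   extended substitution. *)
Lemma ev_possible_subst s (u : TM s) (th : subst o) (J : asg o pv_frame) :
  (forall x, possible (sa th (tName o x)) (J x)) ->
  exists a, ev J u a /\ possible (sa th u) a.
Proof.
elim: u th J => [x|s1 t f IHf v IHv|x t b IHb] th J thJ.
- by exists (J x); split => //; apply: thJ.
- have [g [fg Rg]] := IHf th J thJ; have [c [vc Rc]] := IHv th J thJ.
  by exists (sval g c); split; [exists g, c|rewrite (S2 saP); apply: Rg].
- have body (w : TM (nty o x)) (c : Val (nty o x)) : possible w c ->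
      exists a, ev (upd J c) b a /\ possible (sa (supd th w) b) a.
    move=> wc; apply: IHb => y; rewrite (S1 saP) /supd /upd.
    case: (name_eq_dec x y) => [exy|_]; first by subst y.
    by have := thJ y; rewrite (S1 saP).
  have [g gP] : {g : Val (nty o x) -> Val t & forall c, ev (upd J c) b (g c)}.
    apply: (choice (P := fun c a => ev (upd J c) b a)) => c.
    have [w wc] := value_inhabited (pv_good_all _) c.
    by have [a [ba _]] := body w c wc; exists a.
  have lam_tracked v c : possible v c -> possible (tApp (sa th (tLam x b)) v) (g c).
    move=> vc; rewrite -possible_nf (S3 saP) possible_nf.
    by have [a [ba Ra]] := body v c vc; rewrite -(ev_functional ba (gP c)).
  by exists (exist _ g (ex_intro _ _ lam_tracked)); split; [exact: gP|exact: lam_tracked].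
Qed.

Lemma ev_possible s (u : TM s) : exists a, ev pv_asg u a /\ possible u a.
Proof.
have [x|a [ua Ra]] := ev_possible_subst u (th := sempty o) (J := pv_asg).
  by rewrite (S1 saP); exact: possible_asg.
by exists a; split => //; rewrite -possible_nf -(S4 saP) possible_nf.
Qed.

Lemma pv_model : branch nf E -> is_model E pv_asg truth.
Proof.
move=> E_normal; split.
  split=> [|||s a b]; first by move=> s u; have [a [ua _]] := ev_possible u; exists a.
  - by exists bool_val => [a|x //]; exact: bool_valK.
  - by [].
  - by split=> [/asboolP|/asboolP].
move=> u Eu a ua; have [a' [ua' Ra']] := ev_possible u.
rewrite (ev_functional ua ua') -(bool_valK a') possible_bool_val (E_normal u Eu) in Ra' *.
by case: (truth a') Ra'.
Qed.

Lemma pv_surjective : complete nf E -> surjective_interp pv_asg.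
Proof.
move=> E_complete s a; have [u ua] := value_inhabited (pv_good_all s) a.
have [a' [ua' ua'_poss]] := ev_possible u; exists u.
have uu_normal : normal nf (teq (nf u) (nf u)) by rewrite /normal nf_teq nfK.
case: (E_complete _ uu_normal) => [Euu|Duu].
  by rewrite (equation_value (pv_good_all s) Euu ua ua'_poss).
by case: (pv_good_not_distinct (pv_good_all s) ua ua).
Qed.

End Evaluation.

Lemma distinct_terms_finite b : finite_branch E ->
  exists l : seq (TM (TBase b)), forall u v, distinct u v -> In u l /\ In v l.
Proof.
case=> LE LEP.
pose sides (w : TM (tyo o)) : seq (TM (TBase b)) :=
  if pselect (exists p : TM (TBase b) * TM (TBase b), w = neg (teq p.1 p.2)) is left ex
  then [:: (sval (cid ex)).1; (sval (cid ex)).2] else [::].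
exists (flat_map sides LE) => u v Duv.
suff uv_sides : In u (sides (neg (teq u v))) /\ In v (sides (neg (teq u v))).
  by case: uv_sides; split; apply/in_flat_map; exists (neg (teq u v)); split => //; apply/LEP.
rewrite /sides; case: pselect => [ex|]; last by case; exists (u, v).
by case: (neg_teq_inj (svalP (cid ex))) => <- <-; split; [left|right; left].
Qed.

Lemma discriminant_outside b (P : TM (TBase b) -> Prop) (l : seq (TM (TBase b))) w :
  discriminant P -> (forall u v, distinct u v -> In u l /\ In v l) -> ~ In w l ->
  P w <-> nf w = w.
Proof.
move=> [Pnf _ Pmax] lP wNl; split; first exact: Pnf.
move=> wnf; apply: Pmax => // [/lP []//|z _]; split; by move=> /lP [].
Qed.

Lemma Val_sort_finite b : b <> o -> finite_branch E -> finite_type (Val (TBase b)).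
Proof.
move=> b_sort E_finite.
have [l lP] := distinct_terms_finite b E_finite; have [L LP] := finite_bool_seqs (size l).
apply: (@finite_type_inj _ _ (fun a : Val (TBase b) => map (fun t => `[< (sval a).2 t >]) l) L).
  by move=> a; apply: LP; rewrite size_map.
move=> a a'; have [P [dP ->]] := Val_sortP b_sort a; have [Q [dQ ->]] := Val_sortP b_sort a'.
move/map_ext_in_iff => /= PQl; apply: disc_val_ext => w; have [wl|wNl] := EM (In w l).
  by have := PQl w wl; case: (asboolP (P w)); case: (asboolP (Q w)).
by rewrite (discriminant_outside dP lP wNl) (discriminant_outside dQ lP wNl).
Qed.

Lemma Val_finite : finite_branch E -> forall s, finite_type (Val s).
Proof.
move=> E_finite; elim=> [b|s1 fin1 s2 fin2]; last exact: finite_type_sig (finite_type_fun _ _).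
case: (b =P o) => [->|b_sort]; last exact: Val_sort_finite.
exists [:: bool_val true; bool_val false] => a.
by rewrite -(bool_valK a); case: (truth a); [left|right; left].
Qed.

End ModelExistence.

Theorem theorem7p7 (B : countType) (o : B)
  (nf : forall s : ty B, tm o s -> tm o s)
  (sa : subst o -> forall s : ty B, tm o s -> tm o s) :
  normalization nf -> subst_ext nf sa ->
  forall E : tm o (tyo o) -> Prop, branch nf E -> evident nf E ->
  [/\ (exists (D : frame B) (I : asg o D) (tv : car D (tyo o) -> bool),
         is_model E I tv),
      (complete nf E ->
       exists (D : frame B) (I : asg o D) (tv : car D (tyo o) -> bool),
         is_model E I tv /\ surjective_interp I) &
      (finite_branch E ->
       exists (D : frame B) (I : asg o D) (tv : car D (tyo o) -> bool),
         is_model E I tv /\ forall s : ty B, finite_type (car D s))].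
Proof.
move=> nfP saP E E_normal E_evident.
have model := pv_model nfP E_evident saP E_normal.
split; [|move=> E_complete|move=> E_finite];
  exists (pv_frame nfP E_evident), (pv_asg nfP E_evident), (truth (E := E)) => //.
- by split=> //; exact: (pv_surjective saP E_complete).
- by split=> //; exact: (Val_finite nf E_finite).
Qed.
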